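(* Let $k<l$ be positive integers and let $\gamma\in U(k,l)$ be diagonalizable with all eigenvalues of modulus $1$. Then $\gamma$ has an eigenvector lying in the closure $\overline{N_-^{k,l}}$ of $N_-^{k,l}$ in $\mathbb{C}^{k+l}$.
   Context: $\prec u,v\succ_{k,l}=-\sum_{j=1}^k u_j\bar v_j+\sum_{j=k+1}^{k+l}u_j\bar v_j$ on $\mathbb{C}^{k+l}$; $N_-^{k,l}=\{v:\prec v,v\succ_{k,l}<0\}$; $U(k,l)\subset GL(k+l,\mathbb{C})$ is the group of matrices preserving this form. Eigenvectors are nonzero. *)

From HB Require Import structures.
From mathcomp Require Import all_boot all_order all_algebra.
From mathcomp Require Import complex.
Set Implicit Arguments. Unset Strict Implicit. Unset Printing Implicit Defensive.
Import Order.TTheory GRing.Theory Num.Theory.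
Local Open Scope ring_scope.

Definition hform (R : rcfType) (k l : nat) (u v : 'cV[R[i]]_(k + l)) : R[i] :=
  - (\sum_(j < k + l | (j < k)%N) u j 0 * (v j 0)^*)
  + \sum_(j < k + l | (k <= j)%N) u j 0 * (v j 0)^*.

Definition Nminus (R : rcfType) (k l : nat) : pred 'cV[R[i]]_(k + l) :=
  fun v => hform v v < 0.

(* Closure in C^{k+l} for the standard (Euclidean) topology, written out:
   v is a limit of points of A. *)
Definition in_closure (R : rcfType) (n : nat) (A : pred 'cV[R[i]]_n)
    (v : 'cV[R[i]]_n) : Prop :=
  forall eps : R, 0 < eps ->
    exists2 w, A w & \sum_(j < n) `|v j 0 - w j 0| ^+ 2 < (eps%:C)%C.

Definition in_Ukl (R : rcfType) (k l : nat) (g : 'M[R[i]]_(k + l)) : Prop :=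
  g \in unitmx /\ forall u v, hform (g *m u) (g *m v) = hform u v.

Definition is_eigenvector (R : rcfType) (n : nat) (g : 'M[R[i]]_n)
    (v : 'cV[R[i]]_n) : Prop :=
  v != 0 /\ exists a : R[i], g *m v = a *: v.

From HB Require Import structures.
From mathcomp Require Import all_boot all_order all_algebra.
From mathcomp Require Import complex.
Set Implicit Arguments. Unset Strict Implicit. Unset Printing Implicit Defensive.
Import Order.TTheory GRing.Theory Num.Theory.
Local Open Scope ring_scope.

(* Write e_0 = sum_j x_j with x_j eigenvectors of g for pairwise distinct
   eigenvalues a_j.  Since g preserves the form, <x_i,x_j> = a_i a_j^* <x_i,x_j>,
   and for |a_j| = 1, a_i <> a_j we have a_i a_j^* <> 1, so the x_j are pairwise
   orthogonal.  Hence -1 = <e_0,e_0> = sum_j <x_j,x_j>, so some eigenvector x_j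
   already lies in N_-. *)

Section LinearAlgebra.
Variable F : fieldType.

Lemma diagonalizable_trmx n (A : 'M[F]_n) : diagonalizable A -> diagonalizable A^T.
Proof.
move=> [P P_unit /(diagonalizable_forLR P_unit) [d ->]].
have PTV_unit : invmx P^T \in unitmx by rewrite unitmx_inv unitmx_tr.
exists (invmx P^T) => //; apply/(diagonalizable_forLR PTV_unit); exists d.
rewrite /mxpoly.conjmx !pinvmxE ?unitmx_inv ?unitmx_tr // !invmxK.
by rewrite !trmx_mul tr_diag_mx trmx_inv mulmxA.
Qed.

Lemma eigenvalue_col n (A : 'M[F]_n) (a : F) (v : 'cV_n) :
  v != 0 -> A *m v = a *: v -> eigenvalue A a.
Proof.
move=> v_neq0 Av; rewrite /eigenvalue /eigenspace kermx_eq0 row_free_unit.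
apply: contra v_neq0 => A_unit.
have Av0 : (A - a%:M) *m v = 0 by rewrite mulmxBl Av mul_scalar_mx subrr.
by rewrite -(mulKmx A_unit v) Av0 mulmx0.
Qed.

Lemma diagonalizable_col_eigen_sum n (A : 'M[F]_n) (v : 'cV_n) :
  diagonalizable A ->
  exists (rs : seq F) (x : 'I_(size rs) -> 'cV_n),
    [/\ uniq rs, v = \sum_j x j & forall j, A *m x j = rs`_j *: x j].
Proof.
move=> /diagonalizable_trmx /diagonalizablePeigen [rs rs_uniq rs_full].
rewrite (big_nth 0) big_mkord in rs_full.
have : (v^T <= \sum_(j < size rs) eigenspace A^T rs`_j)%MS.
  by rewrite rs_full submx1.
move=> /sub_sumsmxP [u vE].
exists rs, (fun j => (u j *m eigenspace A^T rs`_j)^T); split=> //.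
  by rewrite -[v]trmxK vE raddf_sum.
move=> j; have /eigenspaceP uA := submxMl (u j) (eigenspace A^T rs`_j).
by rewrite -[A in A *m _]trmxK -trmx_mul uA linearZ.
Qed.

End LinearAlgebra.

Lemma sumr_lt0_exists (R : numDomainType) (I : finType) (f : I -> R) :
  (forall i, f i \is Num.real) -> \sum_i f i < 0 -> exists i, f i < 0.
Proof.
move=> f_real sum_lt0; apply/existsP; apply: contraTT sum_lt0.
rewrite negb_exists => /forallP f_ge0; rewrite -real_leNgt ?rpred_sum ?real0 //.
by apply: sumr_ge0 => i _; rewrite real_leNgt ?real0 ?f_ge0.
Qed.

Lemma in_closure_mem (R : rcfType) n (A : pred 'cV[R[i]]_n) v :
  A v -> in_closure A v.
Proof.
move=> Av eps eps_gt0; exists v => //.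
by rewrite big1 ?ltcR // => j _; rewrite subrr normr0 expr0n.
Qed.

Section HermitianForm.
Variables (R : rcfType) (k l : nat).
Local Notation V := 'cV[R[i]]_(k + l).
Local Notation hform := (@hform R k l).

Lemma hformDl (u1 u2 v : V) : hform (u1 + u2) v = hform u1 v + hform u2 v.
Proof.
rewrite /hform.
under eq_bigr do rewrite mxE mulrDl.
under [X in _ + X = _]eq_bigr do rewrite mxE mulrDl.
by rewrite !big_split /= opprD addrACA.
Qed.

Lemma hformDr (u v1 v2 : V) : hform u (v1 + v2) = hform u v1 + hform u v2.
Proof.
rewrite /hform.
under eq_bigr do rewrite mxE rmorphD mulrDr.
under [X in _ + X = _]eq_bigr do rewrite mxE rmorphD mulrDr.
by rewrite !big_split /= opprD addrACA.
Qed.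

Lemma hformZl a (u v : V) : hform (a *: u) v = a * hform u v.
Proof.
rewrite /hform mulrDr mulrN !mulr_sumr.
by congr (- _ + _); apply: eq_bigr => j _; rewrite mxE mulrA.
Qed.

Lemma hformZr a (u v : V) : hform u (a *: v) = a^* * hform u v.
Proof.
rewrite /hform mulrDr mulrN !mulr_sumr.
by congr (- _ + _); apply: eq_bigr => j _; rewrite mxE rmorphM mulrCA.
Qed.

Lemma hform0l (v : V) : hform 0 v = 0.
Proof. by rewrite -(scale0r 0) hformZl mul0r. Qed.

Lemma hform0r (v : V) : hform v 0 = 0.
Proof. by rewrite -(scale0r 0) hformZr rmorph0 mul0r. Qed.

Lemma hform_suml (I : finType) (x : I -> V) v :
  hform (\sum_i x i) v = \sum_i hform (x i) v.
Proof.
exact: (big_morph (hform^~ v) (fun u1 u2 => hformDl u1 u2 v) (hform0l v)).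
Qed.

Lemma hform_sumr (I : finType) (x : I -> V) v :
  hform v (\sum_i x i) = \sum_i hform v (x i).
Proof. exact: (big_morph (hform v) (hformDr v) (hform0r v)). Qed.

Lemma hform_real (v : V) : hform v v \is Num.real.
Proof.
by rewrite /hform rpredD ?rpredN // rpred_sum // => j _;
  apply/ger0_real/mul_conjC_ge0.
Qed.

Lemma hform_delta (i : 'I_(k + l)) :
  hform (delta_mx i 0) (delta_mx i 0) = if (i < k)%N then -1 else 1.
Proof.
pose e : V := delta_mx i 0.
have eE (P : pred 'I_(k + l)) : \sum_(j | P j) e j 0 * (e j 0)^* = (P i)%:R.
  rewrite big_mkcond (bigD1 i) //= big1 => [|j /negbTE ji]; last first.
    by rewrite !mxE ji mul0r if_same.
  by rewrite !mxE eqxx conjC1 mulr1 addr0; case: (P i).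
by rewrite /hform !eE /=; case: ltnP => _; rewrite ?oppr0 (addr0, add0r).
Qed.

Lemma hform_sum_orthogonal (I : finType) (x : I -> V) :
  (forall i j, i != j -> hform (x i) (x j) = 0) ->
  hform (\sum_i x i) (\sum_i x i) = \sum_i hform (x i) (x i).
Proof.
move=> x_orth; rewrite hform_suml; apply: eq_bigr => i _.
rewrite hform_sumr (bigD1 i) //= big1 ?addr0 // => j ji.
by rewrite x_orth // eq_sym.
Qed.

Lemma hform_eigen_orthogonal (g : 'M[R[i]]_(k + l)) (a b : R[i]) (u v : V) :
  (forall u v, hform (g *m u) (g *m v) = hform u v) ->
  g *m u = a *: u -> g *m v = b *: v -> `|b| = 1 -> a != b -> hform u v = 0.
Proof.
move=> g_isometry gu gv b_unit a_neq_b.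
have : a * b^* * hform u v = hform u v.
  by rewrite -mulrA -hformZr -hformZl -gu -gv g_isometry.
apply: contra_eq => uv_neq0; apply/eqP => abuv.
have ab1 : a * b^* = 1 by apply: (mulIf uv_neq0); rewrite abuv mul1r.
have bb1 : b * b^* = 1 by rewrite -normCK b_unit expr1n.
have b_neq0 : b^* != 0 by rewrite conjC_eq0 -normr_eq0 b_unit oner_eq0.
by move/eqP: a_neq_b; apply; apply: (mulIf b_neq0); rewrite ab1 bb1.
Qed.

End HermitianForm.

Theorem mainTheorem14 (R : rcfType) (k l : nat) (g : 'M[R[i]]_(k + l)) :
  (0 < k)%N -> (k < l)%N ->
  in_Ukl g ->
  diagonalizable g ->
  (forall a : R[i], eigenvalue g a -> `|a| = 1) ->
  exists v : 'cV[R[i]]_(k + l), is_eigenvector g v /\ in_closure (@Nminus R k l) v.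
Proof.
move=> k_gt0 _ [_ g_isometry] g_diag g_unimodular.
pose e0 : 'cV[R[i]]_(k + l) := delta_mx (Ordinal (ltn_addr l k_gt0)) 0.
have [rs [x [rs_uniq e0E x_eigen]]] := diagonalizable_col_eigen_sum e0 g_diag.
have x_orth i j : i != j -> hform (x i) (x j) = 0.
  move=> ij; have [->|xj_neq0] := eqVneq (x j) 0; first exact: hform0r.
  apply: (hform_eigen_orthogonal g_isometry (x_eigen i) (x_eigen j)).
    exact/g_unimodular/(eigenvalue_col xj_neq0).
  by rewrite nth_uniq.
have : \sum_j hform (x j) (x j) < 0.
  by rewrite -hform_sum_orthogonal // -e0E hform_delta /= k_gt0 ltrN10.
case/(sumr_lt0_exists (fun j => hform_real _)) => j xj_neg.
exists (x j); split; last exact: in_closure_mem.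
split; last by exists rs`_j.
by apply: contraTneq xj_neg => ->; rewrite hform0l ltxx.
Qed.
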